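(* Let $s\geq 2$ and let $d$ be a positive divisor of $s$. In $G_{(s,0)}$, the subgroup $H=\langle u^d\rangle\rtimes\langle\rho_0\rangle$ is core-free and $|G_{(s,0)}:H|=3ds$. Consequently $G_{(s,0)}$ has a faithful transitive permutation representation of degree $3ds$.
   Context: $G_{(s,0)}$ is the group of the toroidal hypermap $(3,3,3)_{(s,0)}$: the Coxeter group $[3,3,3]=\langle\rho_0,\rho_1,\rho_2\mid \rho_i^2=1,\ (\rho_i\rho_j)^3=1\ (i\neq j)\rangle$ factored by $(\rho_0\rho_1\rho_2\rho_1)^s$; it has order $6s^2$. Here $u=\rho_0\rho_1\rho_2\rho_1$ (a translation of order $s$, with $\rho_0 u\rho_0=u^{-1}$). A subgroup is core-free if it contains no nontrivial normal subgroup of the group. *)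

From mathcomp Require Import all_boot all_fingroup.
Set Implicit Arguments.
Unset Strict Implicit.
Unset Printing Implicit Defensive.
Local Open Scope group_scope.

(* Defining relations of G_(s,0) = [3,3,3] / << (r0 r1 r2 r1)^s >>. *)
Definition rels_G (s : nat) (gT : finGroupType) (r0 r1 r2 : gT) : Prop :=
  [/\ r0 ^+ 2 = 1, r1 ^+ 2 = 1 & r2 ^+ 2 = 1] /\
  [/\ (r0 * r1) ^+ 3 = 1, (r0 * r2) ^+ 3 = 1 & (r1 * r2) ^+ 3 = 1] /\
  (r0 * r1 * r2 * r1) ^+ s = 1.

Definition presents_G (s : nat) (gT : finGroupType) (G : {group gT})
  (r0 r1 r2 : gT) : Prop :=
  [/\ G :=: <<[set r0; r1; r2]>>,
      rels_G s r0 r1 r2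
    & forall (rT : finGroupType) (h0 h1 h2 : rT), rels_G s h0 h1 h2 ->
        exists f : {morphism G >-> rT}, [/\ f r0 = h0, f r1 = h1 & f r2 = h2]].

Definition core_free (gT : finGroupType) (H G : {set gT}) : Prop :=
  forall N : {group gT}, N <| G -> N \subset H -> N :=: 1.

From mathcomp Require Import all_boot all_fingroup all_solvable zify.
From mathcomp Require all_algebra ring.
Set Implicit Arguments.
Unset Strict Implicit.
Unset Printing Implicit Defensive.

(* Write a, b, c for r0, r1, r2 and u = abcb, v = babc.
   1. From the Coxeter relations alone, u and v commute and conjugation by
      a, b, c maps u, v into T = <u><v> (section CoxeterRelations).
   2. Upper bound: T is normal in G, G = T W with W = <bc><b> of order at
      most 6, and #[u], #[v] <= s, so |G| <= |T| |W| <= 6 s^2.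
   3. Lower bound: the universal property maps G onto the group generated by
      three affine reflections of ('Z_s)^2, which contains all 6 s^2 maps
      "linear part of a group of order 6, then translation" (AffineModel).
   4. The chain of inequalities is therefore tight: |G| = 6 s^2, #[u] = s,
      <u> :&: <v> = 1 and T :&: W = 1; hence r0 is not in T and has order 2.
   5. H = <u^d> ><| <r0> has order 2s/d, hence index 3ds.  A normal subgroup
      N inside H meets T trivially (its elements in T are powers of u whose
      r1-conjugates are powers of v), so [N, v] = 1; an element u^k r0
      centralising v would force u = 1.  Thus H is core-free.
   6. G then acts faithfully and transitively on the right cosets of H, and
      numbering the cosets gives the permutation representation of degree
      3ds (section PermRepresentation). *)

(* Step 4 in numbers: with |<u>| |<v>| = |T| |<u> :&: <v>| and
   |T| |W| = |T W| |T :&: W|, the chain 6 s^2 <= |G| <= |T W| <= 6 s^2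
   can only hold with equality everywhere. *)
Lemma tight_order_chain (s ord_u ord_v card_UV card_T card_W card_TW card_TIW
                         card_G : nat) :
  0 < s -> ord_u * ord_v = card_T * card_UV ->
  card_T * card_W = card_TW * card_TIW -> card_G <= card_TW ->
  6 * s * s <= card_G -> ord_u <= s -> ord_v <= s -> card_W <= 6 ->
  0 < card_UV -> 0 < card_TIW ->
  [/\ card_G = 6 * s * s, ord_u = s, card_UV = 1 & card_TIW = 1].
Proof.
move=> s_gt0 eUV eTW leG geG le_u le_v le_W UV_gt0 TIW_gt0.
have eTIW : card_TIW = 1 by nia.
have eG : card_G = 6 * s * s by nia.
have eu : ord_u = s by nia.
by split=> //; nia.
Qed.

(* |H| |G : H| = |G| with |H| = 2s/d and |G| = 6 s^2 gives the index 3ds. *)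
Lemma index_arith (s d i : nat) :
  0 < s -> d %| s -> s %/ d * 2 * i = 6 * s * s -> i = 3 * d * s.
Proof.
move=> s_gt0 /divnK sE E; move: (s %/ d) sE E s_gt0 => k <- E.
rewrite muln_gt0 => /andP[k_gt0 _].
apply/eqP; rewrite -(eqn_pmul2l (_ : 0 < k * 2)) ?muln_gt0 ?k_gt0 // E.
by apply/eqP; nia.
Qed.

Local Open Scope group_scope.

Section PermRepresentation.
Variables (aT : finGroupType) (rT : finType) (to : {action aT &-> rT}).
Variables (G : {group aT}) (S : {set rT}) (x0 : rT).
Hypotheses (x0S : x0 \in S) (actsGS : [acts G, on S | to]).

Let rank (x : rT) : 'I_#|S| := enum_rank_in x0S x.

Definition numbered_act (a : aT) (i : 'I_#|S|) : 'I_#|S| :=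
  if a \in G then rank (to (enum_val i) a) else i.

Lemma numbered_actE a i :
  a \in G -> enum_val (numbered_act a i) = to (enum_val i) a.
Proof.
move=> aG; rewrite /numbered_act aG enum_rankK_in //.
by rewrite (actsP actsGS) ?enum_valP.
Qed.

Lemma numbered_act_inj a : injective (numbered_act a).
Proof.
have [aG | /negbTE naG] := boolP (a \in G); last by move=> i j; rewrite /numbered_act naG.
move=> i j /(congr1 enum_val); rewrite !numbered_actE // => /act_inj.
exact: enum_val_inj.
Qed.

Definition numbered_perm (a : aT) : {perm 'I_#|S|} := perm (@numbered_act_inj a).

Lemma numbered_permE a i :
  a \in G -> enum_val (numbered_perm a i) = to (enum_val i) a.
Proof. by move=> aG; rewrite permE numbered_actE. Qed.

Lemma numbered_perm_morph : {in G &, {morph numbered_perm : a b / a * b}}.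
Proof.
move=> a b aG bG; apply/permP=> i; apply: enum_val_inj.
by rewrite permM !numbered_permE ?groupM // actM.
Qed.

Canonical numbered_morphism := Morphism numbered_perm_morph.

Lemma injm_numbered : [faithful G, on S | to] -> 'injm numbered_morphism.
Proof.
move=> ffulGS; apply/injmP=> a b aG bG /= Eab.
apply/eqP; rewrite eq_mulgV1; apply/eqP.
apply: (faithfulP ffulGS); first by rewrite groupM ?groupV.
move=> x xS; rewrite /= actM -(enum_rankK_in x0S xS) -numbered_permE // Eab.
by rewrite numbered_permE // actK.
Qed.

Lemma transitive_numbered : [transitive G, on S | to] ->
  [transitive numbered_morphism @* G, on [set: 'I_#|S|] | 'P].
Proof.
move=> trGS; pose i0 : 'I_#|S| := rank x0.
suff -> : [set: 'I_#|S|] = orbit 'P (numbered_morphism @* G) i0 by apply: atrans_orbit.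
apply/setP=> j; rewrite inE; apply/esym/orbitP.
have [a aG Ea] := atransP2 trGS (enum_valP i0) (enum_valP j).
exists (numbered_perm a); first by rewrite -[numbered_perm a]/(numbered_morphism a) mem_morphim.
by apply: enum_val_inj; rewrite /= numbered_permE.
Qed.

End PermRepresentation.

Lemma perm_representation (aT : finGroupType) (rT : finType)
    (to : {action aT &-> rT}) (G : {group aT}) (S : {set rT}) (n : nat) :
  [acts G, on S | to] -> [faithful G, on S | to] -> [transitive G, on S | to] ->
  #|S| = n ->
  exists f : {morphism G >-> {perm 'I_n}},
    'injm f /\ [transitive f @* G, on [set: 'I_n] | 'P].
Proof.
move=> actsGS ffulGS trGS <-; have [x0 x0S _] := imsetP trGS.
exists (numbered_morphism x0S actsGS).
by rewrite injm_numbered // transitive_numbered.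
Qed.

Lemma invg_invol (gT : finGroupType) (y : gT) : y * y = 1 -> y^-1 = y.
Proof. by move=> yy; apply/eqP; rewrite eq_invg_mul yy. Qed.

Lemma conj_invol (gT : finGroupType) (x y : gT) : y * y = 1 -> x ^ y = y * x * y.
Proof. by move=> /invg_invol yV; rewrite conjgE yV mulgA. Qed.

Lemma mulgKinv (gT : finGroupType) (x y : gT) : y * y = 1 -> x * y * y = x.
Proof. by move=> yy; rewrite -mulgA yy mulg1. Qed.

Lemma mulg_ctx3 (gT : finGroupType) (w x y z x' y' z' : gT) :
  x * y * z = x' * y' * z' -> w * x * y * z = w * x' * y' * z'.
Proof. by move=> E; rewrite -!mulgA; congr (w * _); rewrite !mulgA. Qed.

Lemma braid_of_order3 (gT : finGroupType) (x y : gT) :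
  x * x = 1 -> y * y = 1 -> (x * y) ^+ 3 = 1 -> x * y * x = y * x * y.
Proof.
move=> xx yy xy3.
have E : x * y * x * (y * x * y) = 1 by rewrite -xy3 !expgS expg0 mulg1 !mulgA.
rewrite -(mulg1 (x * y * x)) -(mulgV (y * x * y)) mulgA E mul1g.
by rewrite !invMg !invg_invol // mulgA.
Qed.

Definition coxeter_rels (gT : finGroupType) (a b c : gT) : Prop :=
  [/\ a * a = 1, b * b = 1 & c * c = 1] /\
  [/\ a * b * a = b * a * b, a * c * a = c * a * c & b * c * b = c * b * c].

Lemma rels_G_coxeter s (gT : finGroupType) (a b c : gT) :
  rels_G s a b c -> coxeter_rels a b c.
Proof.
case=> [[a2 b2 c2] [[ab3 ac3 bc3] _]]; rewrite !expg2 in a2 b2 c2.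
by split; split=> //; apply: braid_of_order3.
Qed.

Definition transl_u (gT : finGroupType) (a b c : gT) : gT := a * b * c * b.
Definition transl_v (gT : finGroupType) (a b c : gT) : gT := b * a * b * c.

Section CoxeterRelations.
Variables (gT : finGroupType) (a b c : gT).
Hypothesis cox : coxeter_rels a b c.

Let aa : a * a = 1. Proof. by case: cox => -[]. Qed.
Let bb : b * b = 1. Proof. by case: cox => -[]. Qed.
Let cc : c * c = 1. Proof. by case: cox => -[]. Qed.
Let aba : a * b * a = b * a * b. Proof. by case: cox => _ []. Qed.
Let aca : a * c * a = c * a * c. Proof. by case: cox => _ []. Qed.
Let bcb : b * c * b = c * b * c. Proof. by case: cox => _ []. Qed.

Local Notation u := (transl_u a b c).
Local Notation v := (transl_v a b c).

Lemma transl_uV : u^-1 = b * c * b * a.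
Proof. by rewrite /transl_u !invMg !invg_invol ?mulgA. Qed.

Lemma transl_vV : v^-1 = c * b * a * b.
Proof. by rewrite /transl_v !invMg !invg_invol ?mulgA. Qed.

Lemma transl_uJa : u ^ a = u^-1.
Proof. by rewrite conj_invol // transl_uV /transl_u !mulgA aa mul1g. Qed.

Lemma transl_vJa : v ^ a = u^-1 * v.
Proof.
rewrite conj_invol // transl_uV /transl_v !mulgA.
rewrite [in LHS]aba mulgKinv // [in LHS](mulg_ctx3 _ aca).
by rewrite (mulg_ctx3 _ aba) !mulgKinv.
Qed.

Lemma transl_uJb : u ^ b = v.
Proof. by rewrite conj_invol // /transl_u /transl_v !mulgA mulgKinv. Qed.

Lemma transl_vJb : v ^ b = u.
Proof. by rewrite conj_invol // /transl_u /transl_v !mulgA bb mul1g. Qed.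

Lemma transl_uJc : u ^ c = u * v^-1.
Proof.
rewrite conj_invol // transl_vV /transl_u !mulgA.
rewrite [in LHS](mulg_ctx3 _ bcb) mulgKinv // -aca.
by rewrite (mulg_ctx3 _ (esym bcb)) !mulgKinv.
Qed.

Lemma transl_vJc : v ^ c = v^-1.
Proof. by rewrite conj_invol // transl_vV /transl_v !mulgA mulgKinv. Qed.

Lemma transl_commute : commute u v.
Proof.
rewrite /commute /transl_u /transl_v !mulgA mulgKinv // -aba.
by rewrite (mulg_ctx3 _ aca) (mulg_ctx3 _ (esym bcb)) mulgKinv.
Qed.

Lemma transl_uV_a : u^-1 * a = b * c * b.
Proof. by rewrite transl_uV mulgKinv. Qed.

End CoxeterRelations.

Module AffineModel.
Import all_algebra ring GRing.Theory.

Section Model.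
Variable s : nat.
Local Notation plane := ('Z_s * 'Z_s)%type.

Definition refl0_fun (p : plane) : plane := (1 - p.1 - p.2, p.2)%R.
Definition refl1_fun (p : plane) : plane := (p.2, p.1).
Definition refl2_fun (p : plane) : plane := (p.1, - p.1 - p.2)%R.
Definition transl_fun (a b : 'Z_s) (p : plane) : plane := (p.1 + a, p.2 + b)%R.

Lemma refl0_funK : involutive refl0_fun.
Proof. by case=> x y; rewrite /refl0_fun /=; congr pair; ring. Qed.
Lemma refl1_funK : involutive refl1_fun.
Proof. by case. Qed.
Lemma refl2_funK : involutive refl2_fun.
Proof. by case=> x y; rewrite /refl2_fun /=; congr pair; ring. Qed.
Lemma transl_funK a b : cancel (transl_fun a b) (transl_fun (- a) (- b))%R.
Proof. by case=> x y; rewrite /transl_fun /=; congr pair; ring. Qed.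

Definition refl0 : {perm plane} := perm (can_inj refl0_funK).
Definition refl1 : {perm plane} := perm (can_inj refl1_funK).
Definition refl2 : {perm plane} := perm (can_inj refl2_funK).
Definition transl a b : {perm plane} := perm (can_inj (transl_funK a b)).

Local Ltac perm_by_ring := apply/permP; case=> x y;
  rewrite ?expgS ?expg0 ?mulg1 ?perm1 ?permM ?permE
          /refl0_fun /refl1_fun /refl2_fun /transl_fun /=;
  congr pair; ring.

Lemma translM a b c d : transl a b * transl c d = transl (a + c)%R (b + d)%R.
Proof. perm_by_ring. Qed.

Lemma transl0 : transl 0%R 0%R = 1.
Proof. perm_by_ring. Qed.

Lemma translX a b n : transl a b ^+ n = transl (a *+ n)%R (b *+ n)%R.
Proof.
elim: n => [|n IHn]; first by rewrite expg0 !mulr0n transl0.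
by rewrite expgSr IHn translM !mulrSr.
Qed.

Lemma refl_u : refl0 * refl1 * refl2 * refl1 = transl (-1)%R 0%R.
Proof. perm_by_ring. Qed.
Lemma refl_v : refl1 * refl0 * refl1 * refl2 = transl 0%R (-1)%R.
Proof. perm_by_ring. Qed.

Lemma model_rels : 1 < s -> rels_G s refl0 refl1 refl2.
Proof.
move=> s_gt1; split; first by split; perm_by_ring.
split; first by split; perm_by_ring.
by rewrite refl_u translX mul0rn mulNrn pchar_Zp // oppr0 transl0.
Qed.

Lemma transl_in (K : {group {perm plane}}) a b :
  refl0 \in K -> refl1 \in K -> refl2 \in K -> transl a b \in K.
Proof.
move=> K0 K1 K2.
have Ku : transl (-1)%R 0%R \in K by rewrite -refl_u !groupM.
have Kv : transl 0%R (-1)%R \in K by rewrite -refl_v !groupM.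
have -> : transl a b = transl (-1)%R 0%R ^+ val (- a)%R * transl 0%R (-1)%R ^+ val (- b)%R.
  by rewrite !translX translM !mulNrn !mul0rn !natr_Zp !opprK addr0 add0r.
by rewrite groupM // groupX.
Qed.

Definition linear_part (k : nat) : {perm plane} :=
  nth 1 [:: 1; refl1; refl2; refl1 * refl2; refl2 * refl1; refl1 * refl2 * refl1] k.

Definition affine_map (q : plane * 'I_6) : {perm plane} :=
  linear_part q.2 * transl q.1.1 q.1.2.

(* The images of the unit vectors (1,0) and (0,1) under [linear_part k]. *)
Definition image_e1 (k : nat) : plane :=
  nth (0, 0)%R [:: (1, 0); (0, 1); (1, -1); (0, -1); (-1, 1); (-1, 0)]%R k.
Definition image_e2 (k : nat) : plane :=
  nth (0, 0)%R [:: (0, 1); (1, 0); (0, -1); (1, -1); (-1, 0); (-1, 1)]%R k.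

Local Ltac by_cases_I6 k :=
  case: k => [[|[|[|[|[|[|//]]]]]] ?];
  rewrite /linear_part /image_e1 /image_e2 /= ?perm1 ?permM ?permE
          /refl1_fun /refl2_fun /=; congr pair; ring.

Lemma linear_part0 (k : 'I_6) : linear_part k (0, 0)%R = (0, 0)%R.
Proof. by_cases_I6 k. Qed.
Lemma linear_part_e1 (k : 'I_6) : linear_part k (1, 0)%R = image_e1 k.
Proof. by_cases_I6 k. Qed.
Lemma linear_part_e2 (k : 'I_6) : linear_part k (0, 1)%R = image_e2 k.
Proof. by_cases_I6 k. Qed.

Local Ltac zero_unit_absurd E :=
  by move/eqP: E; rewrite ?(eq_sym 0%R) ?oppr_eq0 oner_eq0.

(* An affine map is determined by its translation part (the image of the
   origin) and its linear part (the images of the two unit vectors). *)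
Lemma affine_map_inj : injective affine_map.
Proof.
case=> [[a b] k] [[a' b'] k'] E.
have [Ea Eb] : a = a' /\ b = b'.
  move: (congr1 (fun q : {perm plane} => q (0, 0)%R) E).
  by rewrite /affine_map /= !permM !linear_part0 !permE /transl_fun /= !add0r => -[].
subst a' b'; move: E; rewrite /affine_map /= => /mulIg E; congr pair.
move: (congr1 (fun q : {perm plane} => q (1, 0)%R) E).
move: (congr1 (fun q : {perm plane} => q (0, 1)%R) E).
rewrite !linear_part_e1 !linear_part_e2 {E}.
case: k => [[|[|[|[|[|[|//]]]]]] Hk]; case: k' => [[|[|[|[|[|[|//]]]]]] Hk'];
  rewrite /image_e1 /image_e2 /= => E2 E1; try exact: val_inj.
all: move: E1 E2 => /pair_equal_spec[E11 E12] /pair_equal_spec[E21 E22].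
all: exfalso; first [ zero_unit_absurd E11 | zero_unit_absurd E12
                    | zero_unit_absurd E21 | zero_unit_absurd E22 ].
Qed.

Lemma card_model_ge (K : {group {perm plane}}) : 1 < s ->
  refl0 \in K -> refl1 \in K -> refl2 \in K -> 6 * s * s <= #|K|.
Proof.
move=> s_gt1 K0 K1 K2.
have sub : affine_map @: [set: plane * 'I_6] \subset K.
  apply/subsetP=> _ /imsetP [[[a b] k] _ ->]; rewrite groupM ?transl_in //.
  by case: k => [[|[|[|[|[|[|//]]]]]] ?]; rewrite /linear_part /= ?group1 ?groupM.
move: (subset_leq_card sub); rewrite card_imset; last exact: affine_map_inj.
have card_Zs : #|{: 'Z_s}| = s by rewrite card_ord Zp_cast.
by rewrite cardsT !card_prod card_Zs card_ord mulnC mulnA.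
Qed.

Lemma refl2_neq1 : refl2 != 1.
Proof.
apply/eqP => /(congr1 (fun q : {perm plane} => (q (1, 0)%R).2)).
by rewrite perm1 permE /refl2_fun /= subr0 => /eqP; rewrite oppr_eq0 oner_eq0.
Qed.

End Model.
End AffineModel.

Section PresentedGroup.
Variables (s : nat) (gT : finGroupType) (G : {group gT}) (r0 r1 r2 : gT).
Hypotheses (s_gt1 : 1 < s) (presG : presents_G s G r0 r1 r2).

Local Notation u := (transl_u r0 r1 r2).
Local Notation v := (transl_v r0 r1 r2).
Local Notation T := (<[u]> <*> <[v]>)%G.
Local Notation W := (<[r1 * r2]> <*> <[r1]>)%G.

Let genG : G :=: <<[set r0; r1; r2]>>. Proof. by case: presG. Qed.
Let relsG : rels_G s r0 r1 r2. Proof. by case: presG. Qed.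
Let cox : coxeter_rels r0 r1 r2. Proof. exact: rels_G_coxeter relsG. Qed.
Let r0r0 : r0 * r0 = 1. Proof. by case: cox => -[]. Qed.
Let r1r1 : r1 * r1 = 1. Proof. by case: cox => -[]. Qed.
Let r2r2 : r2 * r2 = 1. Proof. by case: cox => -[]. Qed.

Let r0G : r0 \in G. Proof. by rewrite genG mem_gen // !inE eqxx. Qed.
Let r1G : r1 \in G. Proof. by rewrite genG mem_gen // !inE eqxx orbT. Qed.
Let r2G : r2 \in G. Proof. by rewrite genG mem_gen // !inE eqxx !orbT. Qed.
Let uG : u \in G. Proof. by rewrite !groupM. Qed.
Let uT : u \in T. Proof. by rewrite mem_gen // inE cycle_id. Qed.
Let vT : v \in T. Proof. by rewrite mem_gen // inE cycle_id orbT. Qed.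
Let u_sub_T : <[u]> \subset T. Proof. by rewrite cycle_subG. Qed.

(* The translation subgroup T is normal: conjugation by each reflection
   permutes u, v and their inverses. *)
Lemma norm_T : G \subset 'N(T).
Proof.
rewrite genG gen_subG; apply/subsetP=> x; rewrite !inE -orbA => /or3P[] /eqP ->;
  rewrite conjYg -!cycleJ join_subG !cycle_subG.
- by rewrite transl_uJa // transl_vJa // groupM ?groupV ?uT.
- by rewrite transl_uJb // transl_vJb // uT vT.
- by rewrite transl_uJc // transl_vJc // groupM ?groupV ?uT ?vT.
Qed.

(* G = T W, since r0 = u (r1 r2 r1) and W contains r1 and r2 = r1 (r1 r2). *)
Lemma G_sub_TW : G \subset T * W.
Proof.
have WG : W \subset G by rewrite join_subG !cycle_subG groupM.
rewrite -norm_joinEr ?(subset_trans WG norm_T) // genG gen_subG.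
have TW_u : u \in (T <*> W)%G by rewrite (subsetP (joing_subl _ _)).
have TW_b : r1 \in (T <*> W)%G.
  by rewrite (subsetP (joing_subr _ _)) // mem_gen // inE cycle_id orbT.
have TW_bc : r1 * r2 \in (T <*> W)%G.
  by rewrite (subsetP (joing_subr _ _)) // mem_gen // inE cycle_id.
apply/subsetP=> x; rewrite !inE -orbA => /or3P[] /eqP ->.
- by have := groupM TW_u (groupM TW_bc TW_b); rewrite -(transl_uV_a cox) mulKVg.
- exact: TW_b.
- by have := groupM (groupVr TW_b) TW_bc; rewrite mulKg.
Qed.

Lemma card_W_le : #|W| <= 6.
Proof.
have nbc : r1 \in 'N(<[r1 * r2]>).
  have bcJb : (r1 * r2) ^ r1 = (r1 * r2)^-1.
    by rewrite conj_invol // !mulgA r1r1 mul1g invMg !invg_invol.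
  by rewrite inE -cycleJ bcJb cycleV.
rewrite /= norm_joinEr ?cycle_subG //.
apply: leq_trans (dvdn_leq _ (dvdn_cardMg _ _)) _; first by rewrite muln_gt0 !cardG_gt0.
rewrite -[6]/(3 * 2)%N; apply: leq_mul; apply: dvdn_leq => //; rewrite order_dvdn.
- by case: relsG => _ [[_ _ /eqP]].
- by rewrite expg2 r1r1.
Qed.

Lemma order_transl_le : #[u] <= s /\ #[v] <= s.
Proof.
have s_gt0 : 0 < s by apply: ltnW.
have u_s : u ^+ s = 1 by case: relsG => _ [].
rewrite -(transl_uJb cox) orderJ.
by split; apply: dvdn_leq => //; rewrite order_dvdn u_s.
Qed.

(* Mapping G onto the affine model gives the lower bound |G| >= 6 s^2. *)
Lemma card_G_ge : (6 * s * s <= #|G|)%N.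
Proof.
case: presG => _ _ univ.
have [f [f0 f1 f2]] := univ _ _ _ _ (AffineModel.model_rels s_gt1).
apply: leq_trans (leq_morphim f G).
by apply: AffineModel.card_model_ge; rewrite // -?f0 -?f1 -?f2 mem_morphim.
Qed.

(* The chain 6 s^2 <= |G| <= |T W| <= |T| |W| <= #[u] #[v] 6 <= 6 s^2 is
   tight, which pins down |G|, #[u] and two trivial intersections. *)
Lemma G_structure :
  [/\ #|G| = (6 * s * s)%N, #[u] = s, <[u]> :&: <[v]> = 1 & T :&: W = 1].
Proof.
have [le_u le_v] := order_transl_le.
have TE : <[u]> * <[v]> = T.
  rewrite /= norm_joinEr // cents_norm // cent_cycle cycle_subG.
  exact/cent1P/commute_sym/transl_commute.
have eUV := mul_cardG <[u]> <[v]>; rewrite /= TE in eUV.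
have [eG eu eUV1 eTW1] := tight_order_chain (ltnW s_gt1) eUV (mul_cardG T W)
  (subset_leq_card G_sub_TW) card_G_ge le_u le_v card_W_le (cardG_gt0 _) (cardG_gt0 _).
by split=> //; apply/eqP; rewrite trivg_card1 ?eUV1 ?eTW1.
Qed.

(* r2 is nontrivial, since its image refl2 in the affine model is. *)
Lemma r2_neq1 : r2 != 1.
Proof.
case: presG => _ _ univ.
have [f [_ _ f2]] := univ _ _ _ _ (AffineModel.model_rels s_gt1).
by apply: contra_neq (AffineModel.refl2_neq1 s) => r2_1; rewrite -f2 r2_1 morph1.
Qed.

(* r0 is not a translation: otherwise r1 r2 r1 = u^-1 r0 would lie in
   T :&: W = 1, forcing r2 = 1. *)
Lemma r0_notin_T : r0 \notin T.
Proof.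
have [_ _ _ TW1] := G_structure.
apply: contra r2_neq1 => r0T.
have : r1 * r2 * r1 \in T :&: W.
  have bcbT : r1 * r2 * r1 \in T by rewrite -(transl_uV_a cox) groupM ?groupV.
  have bcW : r1 * r2 \in W by rewrite mem_gen // inE cycle_id.
  have bW : r1 \in W by rewrite mem_gen // inE cycle_id orbT.
  by rewrite inE bcbT groupM.
rewrite TW1 inE => /eqP /(congr1 (fun x => r1 * x * r1)).
by rewrite !mulgA r1r1 mul1g !mulgKinv // mulg1 r1r1 => ->.
Qed.

Lemma order_r0 : #[r0] = 2.
Proof.
have r0_neq1 : r0 != 1 by apply: contraNneq r0_notin_T => ->; apply: group1.
have : #[r0] %| 2 by rewrite order_dvdn expg2 r0r0.
rewrite -order_eq1 in r0_neq1; have := order_gt0 r0.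
by case: #[r0] r0_neq1 => [|[|[|k]]].
Qed.

Section TheSubgroupH.
Variable d : nat.
Hypothesis d_dvd_s : d %| s.
Local Notation H := (<[u ^+ d]> <*> <[r0]>).

Let r0_cycle x : x \in <[r0]> -> x = 1 \/ x = r0.
Proof. by rewrite cycle2g ?order_r0 // => /set2P. Qed.

Let ud_sub_T : <[u ^+ d]> \subset T.
Proof. exact: subset_trans (cycleX u d) u_sub_T. Qed.

(* r0 inverts u, so it normalises every subgroup of <[u]>. *)
Lemma r0_norm_ud : <[r0]> \subset 'N(<[u ^+ d]>).
Proof.
rewrite cycle_subG inE -cycleJ conjXg (transl_uJa cox) expgVn.
by rewrite cycleV.
Qed.

Lemma ud_r0_TI : <[u ^+ d]> :&: <[r0]> = 1.
Proof.
apply/trivgP/subsetP => x /setIP [xud /r0_cycle [-> | xr0]]; first exact: group1.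
by move: (subsetP ud_sub_T x xud) r0_notin_T; rewrite xr0 => ->.
Qed.

Lemma sdprod_H : <[u ^+ d]> ><| <[r0]> = H.
Proof. exact: sdprodEY r0_norm_ud ud_r0_TI. Qed.

Lemma sub_H_G : H \subset G.
Proof. by rewrite join_subG !cycle_subG groupX. Qed.

Lemma card_H : #|H| = (s %/ d * 2)%N.
Proof.
have [_ ord_u _ _] := G_structure.
rewrite /= norm_joinEr ?r0_norm_ud //.
have := mul_cardG <[u ^+ d]> <[r0]>; rewrite ud_r0_TI cards1 muln1 => <-.
change (#[u ^+ d] * #[r0] = s %/ d * 2)%N.
by rewrite orderXdiv ord_u // order_r0.
Qed.

Lemma index_H : #|G : H| = (3 * d * s)%N.
Proof.
have [card_G _ _ _] := G_structure.
apply: index_arith (ltnW s_gt1) d_dvd_s _.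
by rewrite -card_H -card_G Lagrange ?sub_H_G.
Qed.

Lemma mem_H x : x \in H -> exists2 y, y \in <[u]> & (x = y \/ x = y * r0).
Proof.
rewrite /= norm_joinEr ?r0_norm_ud // => /mulsgP[y z yud zr0 ->].
exists y; first exact: (subsetP (cycleX u d)).
by case: (r0_cycle zr0) => ->; [left; rewrite mulg1 | right].
Qed.

(* A normal subgroup N of G inside H meets T trivially: an element of N :&: T
   is a power of u, and so is its conjugate by r1, which lies in <[v]>. *)
Lemma normal_sub_H_TI (N : {group gT}) :
  N <| G -> N \subset H -> {in N, forall x, x \in T -> x = 1}.
Proof.
move=> nNG sNH; have [_ _ UV1 _] := G_structure.
have NT_u z : z \in N -> z \in T -> z \in <[u]>.
  move=> zN zT; have [y yu [-> // | zE]] := mem_H (subsetP sNH z zN).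
  case/negP: r0_notin_T.
  by have := groupM (groupVr (subsetP u_sub_T y yu)) zT; rewrite zE mulKg.
move=> x xN xT.
have : x ^ r1 \in <[u]> :&: <[v]>.
  have r1N : r1 \in 'N(N) := subsetP (normal_norm nNG) r1 r1G.
  have r1T : r1 \in 'N(T) := subsetP norm_T r1 r1G.
  have xr1u : x ^ r1 \in <[u]> by rewrite NT_u ?memJ_norm.
  have xr1v : x ^ r1 \in <[v]> by rewrite -(transl_uJb cox) cycleJ memJ_conjg NT_u.
  by rewrite inE xr1u.
by rewrite UV1 inE conjg_eq1 => /eqP.
Qed.

Lemma core_free_H : core_free H G.
Proof.
move=> N nNG sNH; have NT1 := normal_sub_H_TI nNG sNH.
have [_ ord_u _ _] := G_structure.
apply/trivgP/subsetP => x xN; rewrite inE; apply/eqP.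
have xG := subsetP (normal_sub nNG) x xN.
have vG : v \in G by rewrite !groupM.
(* The commutator [x, v] lies in N and in T, hence x commutes with v. *)
have xv : commute x v.
  apply/commgP/eqP; apply: NT1.
    by rewrite commgEl groupM ?groupV // memJ_norm // (subsetP (normal_norm nNG)).
  by rewrite commgEr groupM // memJ_norm ?groupV // (subsetP norm_T).
have [y yu [xE | xE]] := mem_H (subsetP sNH x xN).
  by apply: NT1; rewrite // xE (subsetP u_sub_T).
(* Otherwise r0 = y^-1 x commutes with v, so v = v ^ r0 = u^-1 v and u = 1. *)
have yv : commute y v.
  by case/cycleP: yu => k ->; apply/commute_sym/commuteX/commute_sym/transl_commute.
have r0v : commute v r0.
  have : commute v (y^-1 * x).
    by apply: commuteM; [apply/commuteV/commute_sym | apply/commute_sym].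
  by rewrite xE mulKg.
have vr0 : v ^ r0 = v by apply/conjg_fixP/commgP.
have u1 : u^-1 = 1 by apply: (mulIg v); rewrite mul1g -(transl_vJa cox).
by move: s_gt1; rewrite -ord_u -orderV u1 order1.
Qed.

End TheSubgroupH.
End PresentedGroup.

Theorem mainTheorem7 (s d : nat) (gT : finGroupType) (G : {group gT})
  (r0 r1 r2 : gT) :
  2 <= s -> 0 < d -> d %| s ->
  presents_G s G r0 r1 r2 ->
  let u := r0 * r1 * r2 * r1 in
  let H := <[u ^+ d]> <*> <[r0]> in
  [/\ <[u ^+ d]> ><| <[r0]> = H,
      core_free H G,
      #|G : H| = (3 * d * s)%N
    & exists f : {morphism G >-> {perm 'I_(3 * d * s)%N}},
        'injm f /\ [transitive f @* G, on [set: 'I_(3 * d * s)%N] | 'P]].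
Proof.
move=> s_gt1 _ d_dvd_s presG u H.
have idxH : #|G : H| = (3 * d * s)%N := index_H s_gt1 presG d_dvd_s.
have cfH : core_free H G := core_free_H s_gt1 presG (d := d).
split=> //; first exact: sdprod_H s_gt1 presG d.
apply: perm_representation (actsRs_rcosets H G) _ (transRs_rcosets H G) idxH.
have gcore1 := cfH _ (gcore_normal (sub_H_G presG d)) (gcore_sub H G).
by rewrite /faithful astabRs_rcosets gcore1 subsetIr.
Qed.
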